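(* Let $\Omega\subseteq\mathbb{R}^n$ be open, let $\mathcal{F}\subseteq\mathbb{H}(\Omega)$, and define $\varphi,\psi:\Omega\to\overline{\mathbb{R}}$ by $\varphi(x)=\inf\{z\in f(x):f\in\mathcal{F}\}$ and $\psi(x)=\sup\{z\in f(x):f\in\mathcal{F}\}$. Then $\inf\mathcal{F}=F(I(\varphi))$ and $\sup\mathcal{F}=F(S(\psi))$, where the infimum and supremum are taken in $\mathbb{H}(\Omega)$ with respect to $\le$.
   Context: $\overline{\mathbb{R}}=\mathbb{R}\cup\{\pm\infty\}$, $\mathbb{I}\overline{\mathbb{R}}$ is the set of closed intervals $[\underline a,\overline a]$ with $\underline a\le\overline a$ in $\overline{\mathbb{R}}$, $a\in\overline{\mathbb{R}}$ identified with $[a,a]$. $\mathbb{A}(\Omega)$ is the set of functions $\Omega\to\mathbb{I}\overline{\mathbb{R}}$. Partial order: $[\underline a,\overline a]\le[\underline b,\overline b]$ iff $\underline a\le\underline b$ and $\overline a\le\overline b$; $f\le g$ iff $f(x)\le g(x)$ for all $x$. $B_\delta(x)=\{y\in\Omega:\|x-y\|<\delta\}$. For $f\in\mathbb{A}(\Omega)$: $I(f)(x)=\sup_{\delta>0}\inf\{z\in f(y):y\in B_\delta(x)\}$, $S(f)(x)=\inf_{\delta>0}\sup\{z\in f(y):y\in B_\delta(x)\}$, $F(f)(x)=[I(f)(x),S(f)(x)]$. $f$ is H-continuous if for every $g\in\mathbb{A}(\Omega)$ with $g(x)\subseteq f(x)$ for all $x$ one has $F(g)=f$; $\mathbb{H}(\Omega)$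 is the set of H-continuous functions (it is order complete with respect to $\le$). *)

From HB Require Import structures.
From mathcomp Require Import all_boot all_order all_algebra.
From mathcomp Require Import all_classical all_reals all_analysis.
Set Implicit Arguments. Unset Strict Implicit. Unset Printing Implicit Defensive.
Import Order.TTheory GRing.Theory Num.Theory.
Local Open Scope classical_set_scope.
Local Open Scope ring_scope.

Section Hcont.
Variables (R : realType) (n : nat).

Notation pt := 'rV[R]_n.

Definition edist (x y : pt) : R :=
  Num.sqrt (\sum_(i < n) (x ord0 i - y ord0 i) ^+ 2).

Definition Bd (Om : set pt) (delta : R) (x : pt) : set pt :=
  [set y | Om y /\ edist x y < delta].

Definition eopen (Om : set pt) : Prop :=
  forall x, Om x -> exists2 delta : R, 0 < delta & forall y, edist x y < delta -> Om y.

(* an extended interval [a.1, a.2]; functions Omega -> I Rbar are represented as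
   total functions pt -> \bar R * \bar R, only their values on Omega matter *)
Definition ival := (\bar R * \bar R)%type.

Definition in_ival (z : \bar R) (a : ival) : Prop := (a.1 <= z)%E /\ (z <= a.2)%E.

Definition isA (Om : set pt) (f : pt -> ival) : Prop :=
  forall x, Om x -> ((f x).1 <= (f x).2)%E.

Definition degen (phi : pt -> \bar R) : pt -> ival := fun x => (phi x, phi x).

Definition Iop (Om : set pt) (f : pt -> ival) (x : pt) : \bar R :=
  ereal_sup [set ereal_inf [set z | exists2 y, Bd Om delta x y & in_ival z (f y)]
            | delta in [set d : R | 0 < d]].

Definition Sop (Om : set pt) (f : pt -> ival) (x : pt) : \bar R :=
  ereal_inf [set ereal_sup [set z | exists2 y, Bd Om delta x y & in_ival z (f y)]
            | delta in [set d : R | 0 < d]].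

Definition Fop (Om : set pt) (f : pt -> ival) : pt -> ival :=
  fun x => (Iop Om f x, Sop Om f x).

Definition eqOn (Om : set pt) (f g : pt -> ival) : Prop := forall x, Om x -> f x = g x.

Definition leA (Om : set pt) (f g : pt -> ival) : Prop :=
  forall x, Om x -> ((f x).1 <= (g x).1)%E /\ ((f x).2 <= (g x).2)%E.

Definition Hcont (Om : set pt) (f : pt -> ival) : Prop :=
  isA Om f /\
  forall g, isA Om g ->
    (forall x, Om x -> forall z, in_ival z (g x) -> in_ival z (f x)) ->
    eqOn Om (Fop Om g) f.

Definition is_infH (Om : set pt) (FF : set (pt -> ival)) (h : pt -> ival) : Prop :=
  [/\ Hcont Om h, (forall f, FF f -> leA Om h f) &
      (forall g, Hcont Om g -> (forall f, FF f -> leA Om g f) -> leA Om g h)].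

Definition is_supH (Om : set pt) (FF : set (pt -> ival)) (h : pt -> ival) : Prop :=
  [/\ Hcont Om h, (forall f, FF f -> leA Om f h) &
      (forall g, Hcont Om g -> (forall f, FF f -> leA Om f g) -> leA Om h g)].

Definition phiF (FF : set (pt -> ival)) (x : pt) : \bar R :=
  ereal_inf [set z | exists2 f, FF f & in_ival z (f x)].
Definition psiF (FF : set (pt -> ival)) (x : pt) : \bar R :=
  ereal_sup [set z | exists2 f, FF f & in_ival z (f x)].

End Hcont.

(* If f is H-continuous, then F(w) = f for every selection w of f, i.e. every
   w with w(x) in f(x) on Omega.  The operators I and S are monotone, satisfy
   I(w) <= w <= S(w) on Omega, and are idempotent by the triangle inequality.
   For u = I(phi) one has I(u) = u and I(S(u)) = u: for f in the family,
   S(u) <= S(f_1) = f_2, so I(S(u)) <= I(f_2) = f_1, whence I(S(u)) <= phi.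
   These two identities make F(u) H-continuous.  It lies below every member f
   since u <= phi <= f_1, and above every H-continuous lower bound g since
   g_1 = I(g_1) <= I(phi) = u.  The supremum is dual. *)
From Pilot Require Import Defs.
From HB Require Import structures.
From mathcomp Require Import all_boot all_order all_algebra.
From mathcomp Require Import all_classical all_reals all_analysis.
From mathcomp Require Import ring lra.
Set Implicit Arguments. Unset Strict Implicit. Unset Printing Implicit Defensive.
Import Order.TTheory GRing.Theory Num.Theory.
Local Open Scope classical_set_scope.
Local Open Scope ring_scope.

Section EuclideanDistance.
Variables (R : realType) (n : nat).

Lemma sum_mul_sqr_le (a b : 'I_n -> R) :
  (\sum_i a i * b i) ^+ 2 <= (\sum_i a i ^+ 2) * (\sum_i b i ^+ 2).
Proof.
have lagrange : \sum_i \sum_j (a i * b j - a j * b i) ^+ 2 =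
    ((\sum_i a i ^+ 2) * (\sum_j b j ^+ 2) - (\sum_i a i * b i) ^+ 2) *+ 2.
  rewrite mulrnBl mulr2n {2}mulrC expr2 !big_distrlr -sumrMnl -!big_split -sumrB /=.
  apply: eq_bigr => i _; rewrite -sumrMnl -!big_split -sumrB /=.
  by apply: eq_bigr => j _; ring.
have : 0 <= \sum_i \sum_j (a i * b j - a j * b i) ^+ 2.
  by apply: sumr_ge0 => i _; apply: sumr_ge0 => j _; exact: sqr_ge0.
by rewrite lagrange pmulrn_lge0 // subr_ge0.
Qed.

Lemma sqrt_sum_sqrD_le (a b : 'I_n -> R) :
  Num.sqrt (\sum_i (a i + b i) ^+ 2) <=
  Num.sqrt (\sum_i a i ^+ 2) + Num.sqrt (\sum_i b i ^+ 2).
Proof.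
have sum_sqr_ge0 (c : 'I_n -> R) : 0 <= \sum_i c i ^+ 2.
  by apply: sumr_ge0 => i _; exact: sqr_ge0.
have cauchy_schwarz :
    \sum_i a i * b i <= Num.sqrt (\sum_i a i ^+ 2) * Num.sqrt (\sum_i b i ^+ 2).
  rewrite -sqrtrM ?sum_sqr_ge0 // (le_trans (ler_norm _)) // -sqrtr_sqr.
  by rewrite ler_sqrt ?mulr_ge0 ?sum_sqr_ge0 ?sum_mul_sqr_le.
rewrite -ler_sqr ?nnegrE ?addr_ge0 ?sqrtr_ge0 // sqrrD !sqr_sqrtr ?sum_sqr_ge0 //.
have -> : \sum_i (a i + b i) ^+ 2 =
    \sum_i a i ^+ 2 + \sum_i b i ^+ 2 + (\sum_i a i * b i) *+ 2.
  by rewrite -sumrMnl -!big_split /=; apply: eq_bigr => i _; ring.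
lra.
Qed.

Lemma edist_triangle (x y z : 'rV[R]_n) :
  Defs.edist x z <= Defs.edist x y + Defs.edist y z.
Proof.
rewrite /Defs.edist (le_trans _ (sqrt_sum_sqrD_le _ _)) //.
by under eq_bigr => i _ do rewrite -[(x _ i - _)%R](subrKA (y ord0 i)).
Qed.

Lemma edistxx (x : 'rV[R]_n) : Defs.edist x x = 0.
Proof. by rewrite /Defs.edist big1 ?sqrtr0 // => i _; rewrite subrr expr0n. Qed.

End EuclideanDistance.

Lemma in_ival_fst (R : realType) (a : ival R) : (a.1 <= a.2)%E -> in_ival a.1 a.
Proof. by split. Qed.

Lemma in_ival_snd (R : realType) (a : ival R) : (a.1 <= a.2)%E -> in_ival a.2 a.
Proof. by split. Qed.

Section BaireOperators.
Variables (R : realType) (n : nat) (Om : set 'rV[R]_n).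
Local Notation pt := 'rV[R]_n.
Local Notation Ip w := (Iop Om (degen w)).
Local Notation Sp w := (Sop Om (degen w)).

Lemma in_degenP (w : pt -> \bar R) y z : in_ival z (degen w y) <-> z = w y.
Proof.
by split=> [[le_wz le_zw] | ->]; [apply: le_anti; rewrite le_wz le_zw | split].
Qed.

Lemma Iop_le (f : pt -> ival R) x z : Om x -> in_ival z (f x) -> (Iop Om f x <= z)%E.
Proof.
move=> Ox zf; apply: ge_ereal_sup => _ [d d_gt0 <-].
by apply: ereal_inf_lbound; exists x => //; split; rewrite ?edistxx.
Qed.

Lemma Sop_ge (f : pt -> ival R) x z : Om x -> in_ival z (f x) -> (z <= Sop Om f x)%E.
Proof.
move=> Ox zf; apply: le_ereal_inf_tmp => _ [d d_gt0 <-].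
by apply: ereal_sup_ubound; exists x => //; split; rewrite ?edistxx.
Qed.

Lemma le_Iop (f g : pt -> ival R) x :
  (forall y, Om y -> forall z, in_ival z (g y) ->
     exists2 z', in_ival z' (f y) & (z' <= z)%E) ->
  (Iop Om f x <= Iop Om g x)%E.
Proof.
move=> fg; apply: ge_ereal_sup => _ [d d_gt0 <-].
apply: le_ereal_sup_tmp; eexists; first by exists d.
apply: le_ereal_inf_tmp => z [y By zg].
have [z' z'f le_z'z] := fg y By.1 z zg.
by apply: ge_ereal_inf; exists z' => //; exists y.
Qed.

Lemma le_Sop (f g : pt -> ival R) x :
  (forall y, Om y -> forall z, in_ival z (f y) ->
     exists2 z', in_ival z' (g y) & (z <= z')%E) ->
  (Sop Om f x <= Sop Om g x)%E.
Proof.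
move=> fg; apply: le_ereal_inf_tmp => _ [d d_gt0 <-].
apply: ge_ereal_inf; eexists; first by exists d.
apply: ge_ereal_sup => z [y By zf].
have [z' z'g le_zz'] := fg y By.1 z zf.
by apply: le_ereal_sup_tmp; exists z' => //; exists y.
Qed.

Lemma Ip_le (w : pt -> \bar R) x : Om x -> (Ip w x <= w x)%E.
Proof. by move=> Ox; apply: Iop_le => //; apply/in_degenP. Qed.

Lemma Sp_ge (w : pt -> \bar R) x : Om x -> (w x <= Sp w x)%E.
Proof. by move=> Ox; apply: Sop_ge => //; apply/in_degenP. Qed.

Lemma Ip_mono (w1 w2 : pt -> \bar R) x :
  (forall y, Om y -> (w1 y <= w2 y)%E) -> (Ip w1 x <= Ip w2 x)%E.
Proof.
move=> le_w12; apply: le_Iop => y Oy _ /in_degenP ->.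
by exists (w1 y); [apply/in_degenP | exact: le_w12].
Qed.

Lemma Sp_mono (w1 w2 : pt -> \bar R) x :
  (forall y, Om y -> (w1 y <= w2 y)%E) -> (Sp w1 x <= Sp w2 x)%E.
Proof.
move=> le_w12; apply: le_Sop => y Oy _ /in_degenP ->.
by exists (w2 y); [apply/in_degenP | exact: le_w12].
Qed.

Lemma Ip_ext (w1 w2 : pt -> \bar R) x :
  (forall y, Om y -> w1 y = w2 y) -> Ip w1 x = Ip w2 x.
Proof. by move=> w12; apply: le_anti; rewrite !Ip_mono // => y Oy; rewrite w12. Qed.

Lemma Sp_ext (w1 w2 : pt -> \bar R) x :
  (forall y, Om y -> w1 y = w2 y) -> Sp w1 x = Sp w2 x.
Proof. by move=> w12; apply: le_anti; rewrite !Sp_mono // => y Oy; rewrite w12. Qed.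

Lemma half_add_lt (d a b : R) : a < d / 2 -> b < d / 2 -> a + b < d.
Proof. lra. Qed.

Lemma Ip_id (w : pt -> \bar R) x : Om x -> Ip (Ip w) x = Ip w x.
Proof.
move=> Ox; apply: le_anti; rewrite Ip_le //=.
apply: ge_ereal_sup => _ [d d_gt0 <-].
have d2_gt0 : 0 < d / 2 by rewrite divr_gt0.
apply: le_ereal_sup_tmp; eexists; first by exists (d / 2).
apply: le_ereal_inf_tmp => _ [y [Oy xy_lt] /in_degenP ->].
apply: le_ereal_sup_tmp; eexists; first by exists (d / 2).
apply: ereal_inf_le_tmp => z [y' [Oy' yy'_lt] zw].
exists y' => //; split => //.
exact: le_lt_trans (edist_triangle x y y') (half_add_lt xy_lt yy'_lt).
Qed.

Lemma Sp_id (w : pt -> \bar R) x : Om x -> Sp (Sp w) x = Sp w x.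
Proof.
move=> Ox; apply: le_anti; rewrite Sp_ge // andbT.
apply: le_ereal_inf_tmp => _ [d d_gt0 <-].
have d2_gt0 : 0 < d / 2 by rewrite divr_gt0.
apply: ge_ereal_inf; eexists; first by exists (d / 2).
apply: ge_ereal_sup => _ [y [Oy xy_lt] /in_degenP ->].
apply: ge_ereal_inf; eexists; first by exists (d / 2).
apply: ereal_sup_le => z [y' [Oy' yy'_lt] zw].
exists y' => //; split => //.
exact: le_lt_trans (edist_triangle x y y') (half_add_lt xy_lt yy'_lt).
Qed.

Lemma Hcont_Fop_selection (f : pt -> ival R) (w : pt -> \bar R) x :
  Hcont Om f -> (forall y, Om y -> in_ival (w y) (f y)) -> Om x ->
  Fop Om (degen w) x = f x.
Proof.
move=> [_ f_min] wf Ox; apply: f_min Ox => [y _ | y Oy z /in_degenP ->] //.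
exact: wf.
Qed.

Section HcontEndpoints.
Variables (f : pt -> ival R) (x : pt).
Hypotheses (fH : Hcont Om f) (Ox : Om x).

Let fst_sel y : Om y -> in_ival (f y).1 (f y).
Proof. by move=> Oy; exact/in_ival_fst/fH.1. Qed.

Let snd_sel y : Om y -> in_ival (f y).2 (f y).
Proof. by move=> Oy; exact/in_ival_snd/fH.1. Qed.

Lemma Hcont_Ip_fst : Ip (fun y => (f y).1) x = (f x).1.
Proof. by rewrite -(Hcont_Fop_selection fH fst_sel Ox). Qed.

Lemma Hcont_Sp_fst : Sp (fun y => (f y).1) x = (f x).2.
Proof. by rewrite -(Hcont_Fop_selection fH fst_sel Ox). Qed.

Lemma Hcont_Ip_snd : Ip (fun y => (f y).2) x = (f x).1.
Proof. by rewrite -(Hcont_Fop_selection fH snd_sel Ox). Qed.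

Lemma Hcont_Sp_snd : Sp (fun y => (f y).2) x = (f x).2.
Proof. by rewrite -(Hcont_Fop_selection fH snd_sel Ox). Qed.

End HcontEndpoints.

Lemma Hcont_Fop (w : pt -> \bar R) :
  (forall x, Om x -> Ip (Sp w) x = Ip w x) ->
  (forall x, Om x -> Sp (Ip w) x = Sp w x) ->
  Hcont Om (Fop Om (degen w)).
Proof.
move=> IS_w SI_w; split=> [x Ox | g gA g_sub x Ox].
  exact: le_trans (Ip_le w Ox) (Sp_ge w Ox).
have g_bounds y : Om y -> (Ip w y <= (g y).1)%E /\ ((g y).2 <= Sp w y)%E.
  move=> Oy; split.
  - by have [] := g_sub y Oy _ (in_ival_fst (gA y Oy)).
  - by have [] := g_sub y Oy _ (in_ival_snd (gA y Oy)).
rewrite /Fop; congr pair; apply: le_anti; apply/andP; split.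
- rewrite -IS_w //; apply: le_Iop => y Oy _ /in_degenP ->.
  exists (g y).1; first exact/in_ival_fst/gA.
  exact: le_trans (gA y Oy) (g_bounds y Oy).2.
- rewrite -(Ip_id w Ox); apply: le_Iop => y Oy z zg.
  by exists (Ip w y); [apply/in_degenP | exact: le_trans (g_bounds y Oy).1 zg.1].
- rewrite -(Sp_id w Ox); apply: le_Sop => y Oy z zg.
  by exists (Sp w y); [apply/in_degenP | exact: le_trans zg.2 (g_bounds y Oy).2].
- rewrite -SI_w //; apply: le_Sop => y Oy _ /in_degenP ->.
  exists (g y).2; first exact/in_ival_snd/gA.
  exact: le_trans (g_bounds y Oy).1 (gA y Oy).
Qed.

Variable FF : set (pt -> ival R).
Hypothesis FF_Hcont : FF `<=` Hcont Om.

Section Infimum.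
Local Notation u := (Ip (phiF FF)).

Lemma phiF_le_fst f x : FF f -> Om x -> (phiF FF x <= (f x).1)%E.
Proof.
move=> Ff Ox; apply: ereal_inf_lbound; exists f => //.
exact/in_ival_fst/(FF_Hcont Ff).1.
Qed.

Lemma Sp_Ip_phiF_le_snd f x : FF f -> Om x -> (Sp u x <= (f x).2)%E.
Proof.
move=> Ff Ox; rewrite -(Hcont_Sp_fst (FF_Hcont Ff) Ox); apply: Sp_mono => y Oy.
exact: le_trans (Ip_le _ Oy) (phiF_le_fst Ff Oy).
Qed.

Lemma Ip_Sp_Ip_phiF x : Om x -> Ip (Sp u) x = u x.
Proof.
move=> Ox; apply: le_anti; apply/andP; split.
  rewrite -(Ip_id (Sp u) Ox); apply: Ip_mono => y Oy.
  apply: le_ereal_inf_tmp => z [f Ff zf]; apply: le_trans zf.1.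
  rewrite -(Hcont_Ip_snd (FF_Hcont Ff) Oy); apply: Ip_mono => y' Oy'.
  exact: Sp_Ip_phiF_le_snd.
by rewrite -[leLHS](Ip_id _ Ox); apply: Ip_mono => y Oy; exact: Sp_ge.
Qed.

Lemma is_infH_Ip_phiF : is_infH Om FF (Fop Om (degen u)).
Proof.
have uE x : Om x -> Ip u x = u x by exact: Ip_id.
split.
- apply: Hcont_Fop => x Ox; first by rewrite Ip_Sp_Ip_phiF // uE.
  exact: Sp_ext.
- move=> f Ff x Ox /=; split; last exact: Sp_Ip_phiF_le_snd.
  by rewrite uE //; exact: le_trans (Ip_le _ Ox) (phiF_le_fst Ff Ox).
- move=> g gH g_lb x Ox /=.
  have g_le_u y : Om y -> ((g y).1 <= u y)%E.
    move=> Oy; rewrite -(Hcont_Ip_fst gH Oy); apply: Ip_mono => y' Oy'.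
    apply: le_ereal_inf_tmp => z [f Ff zf].
    exact: le_trans (g_lb f Ff y' Oy').1 zf.1.
  split; first by rewrite uE //; exact: g_le_u.
  by rewrite -(Hcont_Sp_fst gH Ox); exact: Sp_mono.
Qed.

End Infimum.

Section Supremum.
Local Notation v := (Sp (psiF FF)).

Lemma snd_le_psiF f x : FF f -> Om x -> ((f x).2 <= psiF FF x)%E.
Proof.
move=> Ff Ox; apply: ereal_sup_ubound; exists f => //.
exact/in_ival_snd/(FF_Hcont Ff).1.
Qed.

Lemma fst_le_Ip_Sp_psiF f x : FF f -> Om x -> ((f x).1 <= Ip v x)%E.
Proof.
move=> Ff Ox; rewrite -(Hcont_Ip_snd (FF_Hcont Ff) Ox); apply: Ip_mono => y Oy.
exact: le_trans (snd_le_psiF Ff Oy) (Sp_ge _ Oy).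
Qed.

Lemma Sp_Ip_Sp_psiF x : Om x -> Sp (Ip v) x = v x.
Proof.
move=> Ox; apply: le_anti; apply/andP; split.
  by rewrite -[leRHS](Sp_id _ Ox); apply: Sp_mono => y Oy; exact: Ip_le.
rewrite -(Sp_id (Ip v) Ox); apply: Sp_mono => y Oy.
apply: ge_ereal_sup => z [f Ff zf]; apply: le_trans zf.2 _.
rewrite -(Hcont_Sp_fst (FF_Hcont Ff) Oy); apply: Sp_mono => y' Oy'.
exact: fst_le_Ip_Sp_psiF.
Qed.

Lemma is_supH_Sp_psiF : is_supH Om FF (Fop Om (degen v)).
Proof.
have vE x : Om x -> Sp v x = v x by exact: Sp_id.
split.
- apply: Hcont_Fop => x Ox; last by rewrite Sp_Ip_Sp_psiF // vE.
  exact: Ip_ext.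
- move=> f Ff x Ox /=; split; first exact: fst_le_Ip_Sp_psiF.
  by rewrite vE //; exact: le_trans (snd_le_psiF Ff Ox) (Sp_ge _ Ox).
- move=> g gH g_ub x Ox /=.
  have v_le_g y : Om y -> (v y <= (g y).2)%E.
    move=> Oy; rewrite -(Hcont_Sp_snd gH Oy); apply: Sp_mono => y' Oy'.
    apply: ge_ereal_sup => z [f Ff zf].
    exact: le_trans zf.2 (g_ub f Ff y' Oy').2.
  split; last by rewrite vE //; exact: v_le_g.
  by rewrite -(Hcont_Ip_snd gH Ox); exact: Ip_mono.
Qed.

End Supremum.

End BaireOperators.

Theorem theorem9 (R : realType) (n : nat) (Om : set 'rV[R]_n)
  (FF : set ('rV[R]_n -> (\bar R * \bar R)%type)) :
  eopen Om ->
  FF `<=` Hcont Om ->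
  is_infH Om FF (Fop Om (degen (Iop Om (degen (phiF FF))))) /\
  is_supH Om FF (Fop Om (degen (Sop Om (degen (psiF FF))))).
Proof.
(* I and S only see Om through the sets B_delta(x). *)
by move=> _ FF_Hcont; split; [exact: is_infH_Ip_phiF | exact: is_supH_Sp_psiF].
Qed.
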